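(* Let $k \ge 1$ and let $\tau_0, \tau_1, \ldots, \tau_t \in \{0,1\}^{2^k}$ be such that (1) for every $i \in \{1,\dots,t\}$, $\tau_i$ and $\tau_{i-1}$ differ in exactly one coordinate; (2) for every $i \in \{1,\dots,t\}$, $\mathrm{mem}(\tau_i)$ and $\mathrm{mem}(\tau_{i-1})$ differ in exactly one coordinate; and (3) $\mathrm{mem}(\tau_t) = \mathrm{mem}(\tau_0)$. Then $\tau_t = \tau_0$.
   Context: Index the coordinates of $\tau \in \{0,1\}^{2^k}$ by $J \in \{0,1,\dots,2^k-1\}$, and for such $J$ let $\mathrm{bin}(J) \in \{0,1\}^k$ be its binary representation, with coordinates indexed by $j \in \{0,\dots,k-1\}$ so that $J = \sum_j \mathrm{bin}(J)_j 2^j$. The map $\mathrm{mem}: \{0,1\}^{2^k} \to \{0,1\}^k$ is defined by $\mathrm{mem}(\tau)_j = \bigoplus_{J=0}^{2^k-1} \mathrm{bin}(J)_j \cdot \tau_J$ for each $j \in \{0,\dots,k-1\}$. *)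

From mathcomp Require Import all_boot.
Set Implicit Arguments. Unset Strict Implicit. Unset Printing Implicit Defensive.

Definition bin_digit (J j : nat) : bool := odd (J %/ 2 ^ j).

Definition memmap (k : nat) (tau : {ffun 'I_(2 ^ k) -> bool}) : {ffun 'I_k -> bool} :=
  [ffun j : 'I_k => \big[addb/false]_(J < 2 ^ k) (bin_digit J j && tau J)].

Definition differ_in_one (I : finType) (x y : {ffun I -> bool}) : Prop :=
  #|[set i | x i != y i]| = 1.

From mathcomp Require Import all_boot.

Set Implicit Arguments.
Unset Strict Implicit.
Unset Printing Implicit Defensive.

(* Over GF(2), mem is linear, and flipping coordinate J of tau flips exactly
   the coordinates j of mem(tau) with bin(J)_j = 1.  So a step satisfying (1)
   and (2) flips a coordinate J = 2^j whose index has a single binary digit;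
   all other coordinates of tau never change along the walk.  Then
   mem(tau)_j is tau_(2^j) plus a sum of such fixed coordinates, so
   mem(tau_t) = mem(tau_0) forces tau_t(2^j) = tau_0(2^j) as well. *)

Lemma bin_digitS M j : bin_digit M j.+1 = bin_digit M./2 j.
Proof. by rewrite /bin_digit expnS divnMA divn2. Qed.

Lemma bin_digit_inj k J J' : J < 2 ^ k -> J' < 2 ^ k ->
  (forall j, j < k -> bin_digit J j = bin_digit J' j) -> J = J'.
Proof.
elim: k J J' => [|k IHk] J J'.
  by rewrite expn0 !ltnS !leqn0 => /eqP-> /eqP->.
have lt_half M : M < 2 ^ k.+1 -> M./2 < 2 ^ k.
  by rewrite -divn2 ltn_divLR // mulnC -expnS.
move=> /lt_half ltJ /lt_half ltJ' eqJJ'.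
have eq_odd : odd J = odd J' by have := eqJJ' 0 isT; rewrite /bin_digit !divn1.
have eq_half : J./2 = J'./2.
  by apply: IHk => // j ltjk; rewrite -!bin_digitS eqJJ'.
by rewrite -(odd_double_half J) -(odd_double_half J') eq_odd eq_half.
Qed.

Definition one_bit k (J : nat) := #|[set j : 'I_k | bin_digit J j]| == 1.

Lemma one_bitP k J : one_bit k J ->
  exists j : 'I_k, forall i : 'I_k, bin_digit J i = (i == j).
Proof.
by case/cards1P=> j Jj; exists j => i; rewrite -in_set1 -Jj inE.
Qed.

Lemma one_bit_inj k (J J' : 'I_(2 ^ k)) (j : 'I_k) :
  one_bit k J -> one_bit k J' -> bin_digit J j -> bin_digit J' j -> J = J'.
Proof.
move=> /one_bitP[a digJ] /one_bitP[b digJ'].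
rewrite digJ digJ' => /eqP ja /eqP jb.
apply/val_inj/(@bin_digit_inj k); rewrite ?ltn_ord // => i ltik.
by rewrite (digJ (Ordinal ltik)) (digJ' (Ordinal ltik)) -ja -jb.
Qed.

Section FlipWalk.

Variable k : nat.
Implicit Types x y : {ffun 'I_(2 ^ k) -> bool}.

Lemma memmap_addb x y (j : 'I_k) : memmap x j (+) memmap y j =
  \big[addb/false]_(J < 2 ^ k) (bin_digit J j && (x J (+) y J)).
Proof.
rewrite !ffunE -big_split /=; apply: eq_bigr => J _.
by case: (bin_digit J j); case: (x J); case: (y J).
Qed.

Lemma memmap_addb1 x y (j : 'I_k) (J : 'I_(2 ^ k)) :
  (forall J', J' != J -> bin_digit J' j -> x J' = y J') ->
  memmap x j (+) memmap y j = bin_digit J j && (x J (+) y J).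
Proof.
move=> eq_xy; rewrite memmap_addb (bigD1 J) //= big1 ?addbF // => J' /eq_xy.
by case: (bin_digit J' j) => // /(_ isT) ->; rewrite addbb.
Qed.

Lemma flip_step x y :
  differ_in_one x y -> differ_in_one (memmap x) (memmap y) ->
  exists2 J : 'I_(2 ^ k), one_bit k J & forall J', J' != J -> x J' = y J'.
Proof.
move=> /eqP/cards1P[J flipJ] flip_mem.
have neq_xy J' : (x J' != y J') = (J' == J) by rewrite -in_set1 -flipJ inE.
have eq_xy J' : J' != J -> x J' = y J' by rewrite -neq_xy => /negbNE/eqP.
exists J => //; apply/eqP; rewrite -[RHS]flip_mem; apply: eq_card => j.
rewrite !inE negb_eqb (memmap_addb1 (J := J)) => [|J' nJ _]; last exact: eq_xy.
by rewrite -negb_eqb neq_xy eqxx andbT.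
Qed.

Lemma flip_walk_multi_bit (t : nat) (tau : nat -> {ffun 'I_(2 ^ k) -> bool}) :
  (forall i, 1 <= i <= t -> differ_in_one (tau i) (tau i.-1)) ->
  (forall i, 1 <= i <= t -> differ_in_one (memmap (tau i)) (memmap (tau i.-1))) ->
  forall i, i <= t -> forall J : 'I_(2 ^ k), ~~ one_bit k J -> tau i J = tau 0 J.
Proof.
move=> flip flip_mem; elim=> [//|i IHi] lt_it J multiJ.
have [J0 oneJ0 eq_tau] := flip_step (flip i.+1 lt_it) (flip_mem i.+1 lt_it).
rewrite eq_tau ?IHi ?(ltnW lt_it) //.
by apply: contraNneq multiJ => ->.
Qed.

Lemma memmap_addb_one_bit x y (J : 'I_(2 ^ k)) (j : 'I_k) :
  (forall J' : 'I_(2 ^ k), ~~ one_bit k J' -> x J' = y J') ->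
  one_bit k J -> bin_digit J j ->
  memmap x j (+) memmap y j = x J (+) y J.
Proof.
move=> eq_xy oneJ digJ; rewrite (memmap_addb1 (J := J)) ?digJ // => J' nJ digJ'.
apply: eq_xy; apply: contra nJ => oneJ'.
by rewrite (one_bit_inj oneJ oneJ' digJ digJ').
Qed.

End FlipWalk.

Theorem claim3p6 (k t : nat) (tau : nat -> {ffun 'I_(2 ^ k) -> bool}) :
  1 <= k ->
  (forall i, 1 <= i <= t -> differ_in_one (tau i) (tau i.-1)) ->
  (forall i, 1 <= i <= t -> differ_in_one (memmap (tau i)) (memmap (tau i.-1))) ->
  memmap (tau t) = memmap (tau 0) ->
  tau t = tau 0.
Proof.
move=> _ flip flip_mem eq_mem.
have fixed := flip_walk_multi_bit flip flip_mem (leqnn t).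
apply/ffunP => J; have [oneJ|] := boolP (one_bit k J); last exact: fixed.
have [j digJ] := one_bitP oneJ.
have := memmap_addb_one_bit (j := j) fixed oneJ.
rewrite digJ eqxx eq_mem addbb => /(_ isT).
by case: (tau t J); case: (tau 0 J).
Qed.
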